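(* Let $\mathcal F$ be an RKHS on $\mathcal Z$ with kernel $K$, equipped with the RKHS norm $\|\cdot\|_K$, and let $U,\delta,\lambda>0$. Then for any $h$, $$\sup_{f\in\mathcal F}\ \Psi_n(h,f)-\lambda\Big(\|f\|_K^2+\frac U{\delta^2}\|f\|_{2,n}^2\Big)=\frac1{4\lambda}\psi_n^\top K_n^{1/2}\Big(\frac U{n\delta^2}K_n+I\Big)^{-1}K_n^{1/2}\psi_n=\frac1{4\lambda}\psi_n^\top K_n\Big(\frac U{n\delta^2}K_n+I\Big)^{-1}\psi_n,$$ where $K_n=(K(z_i,z_j))_{i,j=1}^n$ and $\psi_n=(\frac1n(y_i-h(x_i)))_{i=1}^n$.
   Context: Samples $(y_i,x_i,z_i)_{i=1}^n$. $\Psi_n(h,f)=\frac1n\sum_i(y_i-h(x_i))f(z_i)$ and $\|f\|_{2,n}^2=\frac1n\sum_if(z_i)^2$. *)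

From HB Require Import structures.
From mathcomp Require Import all_boot all_order all_algebra.
From mathcomp Require Import all_classical all_reals ereal.
Set Implicit Arguments. Unset Strict Implicit. Unset Printing Implicit Defensive.
Import Order.TTheory GRing.Theory Num.Theory.
Local Open Scope ring_scope.
Local Open Scope classical_set_scope.

Definition knorm (R : realType) (Z : Type) (ip : (Z -> R) -> (Z -> R) -> R)
  (f : Z -> R) : R := Num.sqrt (ip f f).

Definition is_RKHS (R : realType) (Z : Type) (F : set (Z -> R))
  (ip : (Z -> R) -> (Z -> R) -> R) (K : Z -> Z -> R) : Prop :=
      F (fun _ => 0) /\
      (forall f g, F f -> F g -> F (fun t => f t + g t)) /\
      (forall (a : R) f, F f -> F (fun t => a * f t)) /\
      (forall f g, F f -> F g -> ip f g = ip g f) /\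
      (forall f g k, F f -> F g -> F k ->
          ip (fun t => f t + g t) k = ip f k + ip g k) /\
      (forall (a : R) f g, F f -> F g -> ip (fun t => a * f t) g = a * ip f g) /\
      (forall f, F f -> 0 <= ip f f) /\
      (forall f, F f -> ip f f = 0 -> f = (fun _ => 0)) /\
      (forall u : nat -> (Z -> R), (forall m, F (u m)) ->
         (forall e : R, 0 < e -> exists N, forall m k, (N <= m)%N -> (N <= k)%N ->
             knorm ip (fun t => u m t - u k t) < e) ->
         exists2 g, F g & forall e : R, 0 < e -> exists N, forall m, (N <= m)%N ->
             knorm ip (fun t => u m t - g t) < e) /\
      (forall z, F (K z)) /\
      (forall f z, F f -> f z = ip f (K z)).

Definition Psi_n (R : realType) (X Z : Type) (n : nat)
  (y : 'I_n -> R) (x : 'I_n -> X) (z : 'I_n -> Z) (h : X -> R) (f : Z -> R) : R :=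
  n%:R^-1 * \sum_(i < n) (y i - h (x i)) * f (z i).

Definition norm2n_sq (R : realType) (Z : Type) (n : nat)
  (z : 'I_n -> Z) (f : Z -> R) : R :=
  n%:R^-1 * \sum_(i < n) f (z i) ^+ 2.

Definition gram (R : realType) (Z : Type) (n : nat) (K : Z -> Z -> R)
  (z : 'I_n -> Z) : 'M[R]_n := \matrix_(i, j) K (z i) (z j).

Definition psi_vec (R : realType) (X : Type) (n : nat)
  (y : 'I_n -> R) (x : 'I_n -> X) (h : X -> R) : 'cV[R]_n :=
  \col_i (n%:R^-1 * (y i - h (x i))).

Definition psd (R : realType) (n : nat) (A : 'M[R]_n) : Prop :=
  A^T = A /\ forall v : 'cV[R]_n, 0 <= (v^T *m A *m v) 0 0.

Definition psd_sqrt (R : realType) (n : nat) (A : 'M[R]_n) : 'M[R]_n :=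
  xget 0 [set S : 'M[R]_n | psd S /\ S *m S = A].

Definition qform (R : realType) (n : nat) (v : 'cV[R]_n) (M : 'M[R]_n) : R :=
  (v^T *m M *m v) 0 0.

From HB Require Import structures.
From mathcomp Require Import all_boot all_order all_algebra.
From mathcomp Require Import all_classical all_reals ereal.
From mathcomp Require Import sesquilinear spectral.
From mathcomp.real_closed Require Import complex.
From mathcomp Require Import ring lra.
Set Implicit Arguments.
Unset Strict Implicit.
Unset Printing Implicit Defensive.
Import Order.TTheory GRing.Theory Num.Theory.
Local Open Scope ring_scope.
Local Open Scope classical_set_scope.

(* Write c := U / (n delta^2) and B(f, g) := <f, g>_K + c * sum_i f(z_i) g(z_i), so that
   the objective is J(f) = sum_i psi_i f(z_i) - lambda B(f, f).  Take
   g := sum_j beta_j K(z_j, .) with (c K_n + I) beta = psi / (2 lambda); by the reproducing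
   property sum_i psi_i f(z_i) = 2 lambda B(g, f) for every f, hence
   J(f) = lambda B(g, g) - lambda B(f - g, f - g) <= J(g), and
   J(g) = (1/2) psi^T K_n beta = psi^T K_n (c K_n + I)^-1 psi / (4 lambda).
   The square-root form follows because K_n^(1/2) commutes with (c K_n + I)^-1; the
   square root itself exists by the spectral theorem applied to K_n viewed over R[i]. *)

Lemma interpolation_poly (R : fieldType) (s : seq R) (g : R -> R) :
  exists p : {poly R}, {in s, forall x, p.[x] = g x}.
Proof.
elim: s => [|a s [p pE]]; first by exists 0.
have [as_|anotin] := boolP (a \in s).
  by exists p => x; rewrite inE => /predU1P[->|]; apply: pE.
pose q := \prod_(b <- s) ('X - b%:P).
have qa : q.[a] != 0.
  rewrite horner_prod prodf_seq_neq0; apply/allP => b bs /=.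
  by rewrite hornerXsubC subr_eq0; apply: contraNneq anotin => ->.
have qs x : x \in s -> q.[x] = 0.
  by move=> xs; rewrite horner_prod (big_rem x) //= hornerXsubC subrr mul0r.
exists (p + ((g a - p.[a]) / q.[a]) *: q) => x; rewrite inE hornerD hornerZ.
case/predU1P=> [->|xs]; first by rewrite mulfVK // addrC subrK.
by rewrite (qs x xs) mulr0 addr0 pE.
Qed.

Lemma trmx_horner_mx (R : comNzRingType) n (A : 'M[R]_n.+1) (p : {poly R}) :
  A^T = A -> (horner_mx A p)^T = horner_mx A p.
Proof.
move=> AT; elim/poly_ind: p => [|p c IH]; first by rewrite rmorph0 trmx0.
rewrite rmorphD rmorphM /= horner_mx_X horner_mx_C raddfD /= tr_scalar_mx.
by rewrite -mulmxE trmx_mul IH AT (comm_mx_horner p (erefl (A *m A))).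
Qed.

Lemma comm_mx_invmx (R : comUnitRingType) n (S M : 'M[R]_n) :
  comm_mx S M -> comm_mx S (invmx M).
Proof.
move=> SM; have [Mu|/invmx_out->//] := boolP (M \in unitmx).
rewrite /comm_mx -[RHS](mulmxK Mu) -(mulmxA _ S) SM.
by rewrite !mulmxA mulVmx // mul1mx.
Qed.

Lemma mulmx_trmx_gt0 (R : realDomainType) m (u : 'rV[R]_m) :
  u != 0 -> 0 < (u *m u^T) 0 0.
Proof.
move=> u0; have [j uj|u_eq0] := pickP (fun j => u 0 j != 0); last first.
  by case/negP: u0; apply/eqP/rowP => j; rewrite mxE; apply/eqP/negbFE/u_eq0.
rewrite mxE (bigD1 j) //= !mxE -expr2 ltr_pwDl //.
  by rewrite lt0r sqrf_eq0 uj sqr_ge0.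
by rewrite sumr_ge0 // => k _; rewrite !mxE -expr2 sqr_ge0.
Qed.

Section PsdMatrices.
Variable R : realType.

Lemma psd_trmx_mulmx m n (B : 'M[R]_(m, n)) : psd (B^T *m B).
Proof.
split=> [|v]; first by rewrite trmx_mul trmxK.
rewrite mulmxA -trmx_mul -mulmxA -{2}[B *m v]trmxK mxE.
by apply: sumr_ge0 => k _; rewrite !mxE -expr2 sqr_ge0.
Qed.

Lemma psd_eigenvalue_ge0 n (A : 'M[R]_n) (e : R) :
  psd A -> \det (A - e%:M) = 0 -> 0 <= e.
Proof.
move=> [_ A_ge0] /eqP/det0P[u u0 /eqP]; rewrite mulmxBr mul_mx_scalar subr_eq0.
move=> /eqP uA; have := A_ge0 u^T; rewrite trmxK uA -scalemxAl mxE.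
by rewrite pmulr_lge0 // mulmx_trmx_gt0.
Qed.

Lemma psd_scale_add1_unitmx n (A : 'M[R]_n) (c : R) :
  psd A -> 0 <= c -> c *: A + 1%:M \in unitmx.
Proof.
move=> [_ A_ge0] c_ge0; rewrite unitmxE unitfE; apply/det0P => -[v v0 vM].
have : (v *m (c *: A + 1%:M) *m v^T) 0 0 = 0 by rewrite vM mul0mx mxE.
rewrite mulmxDr mulmx1 -scalemxAr mulmxDl -scalemxAl [LHS]mxE [X in X + _]mxE.
have := A_ge0 v^T; rewrite trmxK => vAv.
by move/eqP; rewrite gt_eqF // ltr_pwDr ?mulmx_trmx_gt0 ?mulr_ge0.
Qed.

Lemma psd_sqrt_mul_invmx n (A S : 'M[R]_n) (c : R) : S *m S = A ->
  S *m invmx (c *: A + 1%:M) *m S = A *m invmx (c *: A + 1%:M).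
Proof.
move=> SS; have : comm_mx S (c *: A + 1%:M).
  by rewrite /comm_mx mulmxDr mulmxDl -scalemxAr -scalemxAl -SS mulmxA mulmx1 mul1mx.
by move/comm_mx_invmx => SM; rewrite -mulmxA -SM mulmxA SS.
Qed.

Local Notation C := R[i].

Lemma symmetric_complex_diagonalization n (A : 'M[R]_n) : A^T = A ->
  exists P : 'M[C]_n, exists e : 'rV[R]_n,
    P \in unitmx /\
    map_mx (real_complex R) A = invmx P *m diag_mx (map_mx (real_complex R) e) *m P.
Proof.
move=> AT; set AC := map_mx _ A.
have AC_herm : AC \is hermsymmx.
  apply/is_hermitianmxP; rewrite expr0 scale1r; apply/matrixP => i j.
  rewrite !mxE -[in RHS]AT mxE conj_Creal //.
  by apply/complex_realP; exists (A i j).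
have /orthomx_spectralP ACE := hermitian_normalmx AC_herm.
have d_real := hermitian_spectral_diag_real AC_herm.
exists (spectralmx AC), (map_mx (@complex.Re R) (spectral_diag AC)).
split; first exact: spectral_unit.
rewrite [LHS]ACE; congr (_ *m diag_mx _ *m _); apply/rowP => i.
by rewrite !mxE RRe_real //; apply: (mxOverP d_real).
Qed.

Lemma diagonalization_eigenvalue n (A : 'M[R]_n) (P : 'M[C]_n) (e : 'rV[R]_n) :
  P \in unitmx ->
  map_mx (real_complex R) A = invmx P *m diag_mx (map_mx (real_complex R) e) *m P ->
  forall i, \det (A - (e 0 i)%:M) = 0.
Proof.
move=> Pu AE i; apply: (fmorph_inj (real_complex R)).
rewrite rmorph0 -det_map_mx map_mxB map_scalar_mx /= AE.
have scalarE (a : C) : a%:M = invmx P *m a%:M *m P.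
  by rewrite mul_mx_scalar -scalemxAl mulVmx // scalemx1.
rewrite [X in _ - X]scalarE -mulmxBl -mulmxBr !det_mulmx -diag_const_mx -linearB /=.
by rewrite det_diag (bigD1 i) //= !mxE subrr !(mul0r, mulr0).
Qed.

Lemma psd_sqrt_exists n (A : 'M[R]_n) : psd A -> exists S, psd S /\ S *m S = A.
Proof.
case: n A => [|n] A Apsd; first by exists A; split=> //; apply/matrixP => -[].
have [P [e [Pu AE]]] := symmetric_complex_diagonalization Apsd.1.
have e_ge0 i : 0 <= e 0 i.
  exact: psd_eigenvalue_ge0 Apsd (diagonalization_eigenvalue Pu AE i).
have [p pE] := interpolation_poly [seq e 0 i | i <- enum 'I_n.+1]
  (fun t => Num.sqrt (Num.sqrt t)).
(* T = A^(1/4) is symmetric, so T *m T = T^T *m T is psd and squares to A. *)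
pose T := horner_mx A p; have TT : T^T = T := trmx_horner_mx p Apsd.1.
exists (T *m T); split; first by rewrite -{1}TT; apply: psd_trmx_mulmx.
have -> : T *m T *m (T *m T) = horner_mx A (p ^+ 4).
  by rewrite rmorphXn /= !exprS expr0 mulr1 !mulmxE !mulrA.
apply: (@map_mx_inj _ _ (real_complex R)); rewrite map_horner_mx AE.
rewrite horner_mx_uconjC // horner_mx_diag; congr (_ *m diag_mx _ *m _).
apply/rowP => i; rewrite !mxE horner_map /= hornerE pE ?map_f ?mem_enum //.
by rewrite (exprM _ 2 2) !sqr_sqrtr ?sqrtr_ge0.
Qed.

Lemma psd_sqrtP n (A : 'M[R]_n) : psd A ->
  psd (psd_sqrt A) /\ psd_sqrt A *m psd_sqrt A = A.
Proof. by move=> /psd_sqrt_exists; apply: xgetPex. Qed.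

End PsdMatrices.

Lemma ereal_sup_attained (R : realType) T (A : set T) (J : T -> R) (g : T) :
  A g -> (forall f, A f -> J f <= J g) ->
  ereal_sup [set (J f)%:E | f in A] = (J g)%:E.
Proof.
move=> Ag J_le; apply/eqP; rewrite eq_le; apply/andP; split.
  by apply: ge_ereal_sup => _ [f Af <-]; rewrite lee_fin J_le.
by apply: ereal_sup_ubound; exists g.
Qed.

Section KernelExpansion.
Variables (R : realType) (Z : Type) (F : set (Z -> R)).
Variables (ip : (Z -> R) -> (Z -> R) -> R) (K : Z -> Z -> R).
Hypothesis F0 : F (fun _ => 0).
Hypothesis FD : forall f g, F f -> F g -> F (fun t => f t + g t).
Hypothesis FZ : forall (a : R) f, F f -> F (fun t => a * f t).
Hypothesis ipC : forall f g, F f -> F g -> ip f g = ip g f.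
Hypothesis ipD : forall f g k, F f -> F g -> F k ->
  ip (fun t => f t + g t) k = ip f k + ip g k.
Hypothesis ipZ : forall (a : R) f g, F f -> F g ->
  ip (fun t => a * f t) g = a * ip f g.
Hypothesis ip_ge0 : forall f, F f -> 0 <= ip f f.
Hypothesis FK : forall z, F (K z).
Hypothesis ipK : forall f z, F f -> f z = ip f (K z).

Lemma kernel_sym a b : K a b = K b a.
Proof. by rewrite ipK // [RHS]ipK // ipC. Qed.

Lemma ip0 f : F f -> ip (fun _ => 0) f = 0.
Proof.
move=> Ff; have -> : (fun _ => 0) = (fun t => 0 * (fun _ : Z => 0 : R) t).
  by apply: funext => t; rewrite mul0r.
by rewrite ipZ // mul0r.
Qed.

Lemma ip_sub_expand_ge0 f g : F f -> F g ->
  0 <= ip f f - 2 * ip g f + ip g g.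
Proof.
move=> Ff Fg; pose mg t := -1 * g t.
have Fmg : F mg by apply: FZ.
have Fd : F (fun t => f t + mg t) by apply: FD.
suff <- : ip (fun t => f t + mg t) (fun t => f t + mg t) = ip f f - 2 * ip g f + ip g g.
  exact: ip_ge0.
rewrite (ipD Ff Fmg Fd) (ipC Ff Fd) (ipC Fmg Fd) (ipD Ff Fmg Ff) (ipD Ff Fmg Fmg).
by rewrite (ipC Ff Fmg) !ipZ // (ipC Fg Fmg) ipZ //; ring.
Qed.

Lemma F_sum (I : Type) (s : seq I) (g : I -> Z -> R) :
  (forall i, F (g i)) -> F (fun t => \sum_(i <- s) g i t).
Proof.
move=> Fg; elim: s => [|i s IH].
  by rewrite (_ : (fun _ => _) = fun _ => 0) //; apply: funext => t; rewrite big_nil.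
rewrite (_ : (fun _ => _) = fun t => g i t + \sum_(j <- s) g j t); first exact: FD.
by apply: funext => t; rewrite big_cons.
Qed.

Lemma ip_sum (I : Type) (s : seq I) (g : I -> Z -> R) f : (forall i, F (g i)) -> F f ->
  ip (fun t => \sum_(i <- s) g i t) f = \sum_(i <- s) ip (g i) f.
Proof.
move=> Fg Ff; elim: s => [|i s IH].
  rewrite big_nil -[RHS](ip0 Ff); congr ip; apply: funext => t; exact: big_nil.
rewrite (_ : (fun _ => _) = fun t => g i t + \sum_(j <- s) g j t).
  by rewrite ipD ?IH ?big_cons //; apply: F_sum.
by apply: funext => t; rewrite big_cons.
Qed.

Variables (n : nat) (z : 'I_n -> Z).
Local Notation Kn := (gram K z).

Definition kernel_comb (b : 'cV[R]_n) : Z -> R :=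
  fun t => \sum_(j < n) b j 0 * K (z j) t.

Lemma F_kernel_comb b : F (kernel_comb b).
Proof. by apply: F_sum => j; apply: FZ. Qed.

Lemma ip_kernel_comb b f : F f -> ip (kernel_comb b) f = \sum_(j < n) b j 0 * f (z j).
Proof.
move=> Ff; rewrite ip_sum // => [|j]; last exact: FZ.
by apply: eq_bigr => j _; rewrite ipZ // ipC // -ipK.
Qed.

Lemma kernel_comb_sample b i : kernel_comb b (z i) = (Kn *m b) i 0.
Proof. by rewrite mxE; apply: eq_bigr => j _; rewrite mxE mulrC kernel_sym. Qed.

Lemma gram_psd : psd Kn.
Proof.
split=> [|v]; first by apply/matrixP => i j; rewrite !mxE kernel_sym.
rewrite -mulmxA mxE (eq_bigr (fun j => v j 0 * kernel_comb v (z j))).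
  by rewrite -(ip_kernel_comb v (F_kernel_comb v)) ip_ge0 //; apply: F_kernel_comb.
by move=> j _; rewrite kernel_comb_sample mxE.
Qed.

Variable c : R.
Hypothesis c_ge0 : 0 <= c.

Definition bform (f g : Z -> R) : R := ip f g + c * \sum_(i < n) f (z i) * g (z i).

Lemma bform_cross_le f g : F f -> F g ->
  2 * bform g f - bform f f <= bform g g.
Proof.
move=> Ff Fg; rewrite -subr_ge0.
have sqE : \sum_(i < n) (f (z i) - g (z i)) ^+ 2 = \sum_(i < n) f (z i) * f (z i)
    - 2 * \sum_(i < n) g (z i) * f (z i) + \sum_(i < n) g (z i) * g (z i).
  by rewrite mulr_sumr -sumrB -big_split; apply: eq_bigr => i _ /=; ring.
have -> : bform g g - (2 * bform g f - bform f f) = ip f f - 2 * ip g f + ip g g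
    + c * \sum_(i < n) (f (z i) - g (z i)) ^+ 2.
  by rewrite /bform (ipC Fg Ff) sqE; ring.
rewrite addr_ge0 ?ip_sub_expand_ge0 ?mulr_ge0 // sumr_ge0 // => i _.
exact: sqr_ge0.
Qed.

Lemma bform_kernel_comb b f : F f ->
  bform (kernel_comb b) f = \sum_(i < n) ((c *: Kn + 1%:M) *m b) i 0 * f (z i).
Proof.
move=> Ff; rewrite /bform ip_kernel_comb // mulr_sumr -big_split /=.
apply: eq_bigr => i _; rewrite kernel_comb_sample mulmxDl mul1mx -scalemxAl !mxE.
ring.
Qed.

Variables (psi : 'cV[R]_n) (lambda : R).
Hypothesis lambda_gt0 : 0 < lambda.

Definition ridge_objective (f : Z -> R) : R :=
  \sum_(i < n) psi i 0 * f (z i) - lambda * bform f f.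

Let M := c *: Kn + 1%:M.
Let beta := (2 * lambda)^-1 *: (invmx M *m psi).

Lemma bform_representer f : F f ->
  2 * lambda * bform (kernel_comb beta) f = \sum_(i < n) psi i 0 * f (z i).
Proof.
move=> Ff; rewrite bform_kernel_comb // -scalemxAr mulKVmx; last first.
  exact: psd_scale_add1_unitmx gram_psd c_ge0.
rewrite mulr_sumr; apply: eq_bigr => i _; rewrite mxE !mulrA mulfV ?mul1r //.
by rewrite gt_eqF // mulr_gt0.
Qed.

Lemma ridge_objective_le f : F f ->
  ridge_objective f <= ridge_objective (kernel_comb beta).
Proof.
move=> Ff; have Fg := F_kernel_comb beta.
rewrite /ridge_objective -!bform_representer //.
have := bform_cross_le Ff Fg => /(ler_wpM2l (ltW lambda_gt0)).
lra.
Qed.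

Lemma ridge_objective_kernel_comb :
  ridge_objective (kernel_comb beta) = (4 * lambda)^-1 * qform psi (Kn *m invmx M).
Proof.
have Fg := F_kernel_comb beta; have lambda_neq0 : lambda != 0 by rewrite gt_eqF.
have sampleE : \sum_(i < n) psi i 0 * kernel_comb beta (z i)
    = (2 * lambda)^-1 * qform psi (Kn *m invmx M).
  under eq_bigr do rewrite kernel_comb_sample -scalemxAr mxE mulrCA.
  rewrite -mulr_sumr /qform -!mulmxA mxE; congr (_ * _).
  by apply: eq_bigr => i _; rewrite [psi^T _ _]mxE.
have := bform_representer Fg; rewrite /ridge_objective sampleE => representerE.
have -> : lambda * bform (kernel_comb beta) (kernel_comb beta)
    = 2 * lambda * bform (kernel_comb beta) (kernel_comb beta) / 2 by field.
by rewrite representerE; field.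
Qed.

Lemma ereal_sup_ridge_objective :
  ereal_sup [set (ridge_objective f)%:E | f in F]
  = ((4 * lambda)^-1 * qform psi (Kn *m invmx M))%:E.
Proof.
rewrite -ridge_objective_kernel_comb.
apply: ereal_sup_attained => [|f Ff]; first exact: F_kernel_comb.
exact: ridge_objective_le.
Qed.

End KernelExpansion.

Lemma Psi_n_penalizedE (R : realType) (X Z : Type) (ip : (Z -> R) -> (Z -> R) -> R)
    (n : nat) (y : 'I_n -> R) (x : 'I_n -> X) (z : 'I_n -> Z) (h : X -> R)
    (U delta lambda : R) (f : Z -> R) :
  (0 < n)%N -> 0 < delta ->
  Psi_n y x z h f - lambda * (ip f f + U / delta ^+ 2 * norm2n_sq z f)
  = ridge_objective ip z (U / (n%:R * delta ^+ 2)) (psi_vec y x h) lambda f.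
Proof.
move=> n_gt0 delta_gt0; have n_neq0 : n%:R != 0 :> R by rewrite pnatr_eq0 -lt0n.
have delta_neq0 : delta != 0 by rewrite gt_eqF.
rewrite /ridge_objective /bform /Psi_n /norm2n_sq mulr_sumr.
under [in RHS]eq_bigr do rewrite mxE -mulrA.
under [X in U / _ * (_ * X)]eq_bigr do rewrite expr2.
by field; rewrite n_neq0 delta_neq0.
Qed.

Theorem proposition1 (R : realType) (X Z : Type) (F : set (Z -> R))
  (ip : (Z -> R) -> (Z -> R) -> R) (K : Z -> Z -> R) (n : nat)
  (y : 'I_n -> R) (x : 'I_n -> X) (z : 'I_n -> Z) (U delta lambda : R) :
  is_RKHS F ip K -> (0 < n)%N -> 0 < U -> 0 < delta -> 0 < lambda ->
  forall h : X -> R,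
  let Kn := gram K z in
  let psin := psi_vec y x h in
  let M := (U / (n%:R * delta ^+ 2)) *: Kn + 1%:M in
  ereal_sup [set (Psi_n y x z h f
                  - lambda * (ip f f + U / delta ^+ 2 * norm2n_sq z f))%:E
            | f in F]
    = ((4 * lambda)^-1 * qform psin (psd_sqrt Kn *m invmx M *m psd_sqrt Kn))%:E
  /\ (4 * lambda)^-1 * qform psin (psd_sqrt Kn *m invmx M *m psd_sqrt Kn)
     = (4 * lambda)^-1 * qform psin (Kn *m invmx M).
Proof.
move=> [F0 [FD [FZ [ipC [ipD [ipZ [ip_ge0 [_ [_ [FK ipK]]]]]]]]]].
move=> n_gt0 U_gt0 delta_gt0 lambda_gt0 h /=.
have Kn_psd := gram_psd F0 FD FZ ipC ipD ipZ ip_ge0 FK ipK z.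
have c_ge0 : 0 <= U / (n%:R * delta ^+ 2).
  by rewrite ltW // divr_gt0 // mulr_gt0 ?ltr0n ?exprn_gt0.
rewrite psd_sqrt_mul_invmx; last exact: (psd_sqrtP Kn_psd).2.
split=> //; under eq_imagel => f _ do rewrite Psi_n_penalizedE //.
exact: (ereal_sup_ridge_objective F0 FD FZ ipC ipD ipZ ip_ge0 FK ipK).
Qed.
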